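(* Let $c>1$ be an irrational number, let $d=\{c\}^{-1}$, let $c'_n=[c^{-1}n]$, and define $$f(n)=[c^{-1}(n+1)]-[c^{-1}n],\qquad g(n)=[\{c\}(n+1)]-[\{c\}n].$$ Let $k$ be a nonnegative integer, and for a positive integer $m$ let $x=[mc]$. Then, as $m\to\infty$, \begin{align*} \sum_{n=1}^x \frac{f(n)g([\frac{n}{c}]+k+1)}{n} =\;& \frac{\{c\}}{c}+(cd)^{-1}(\log m + \log c + \gamma)+\{d^{-1}(1+k)\}\\ &- \sum_{n=1}^\infty \frac{d^{-1}\{c^{-1}(n+1)\}+\{d^{-1}(c'_{n+1}+k+1)\}}{n(n+1)} + O\left(\frac{1}{m}\right), \end{align*} where $\gamma$ is Euler's constant.
   Context: $[x]$ is the greatest integer not exceeding $x$ and $\{x\}=x-[x]$. The function $f$ is the indicator of $\{[cj]:j\ge1\}$ and $g$ is the indicator of $\{[dj]:j\ge1\}$. The implied constant may depend on $c$ and $k$. *)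

From Stdlib Require Import Reals Lra Lia ZArith.
From Coquelicot Require Import Coquelicot.
Open Scope R_scope.

(* [x] : greatest integer not exceeding x (Int_part x = up x - 1 is the floor). *)
Definition flr (x : R) : R := IZR (Int_part x).
Definition frc (x : R) : R := x - flr x.

Definition irrational (x : R) : Prop :=
  forall p q : Z, q <> 0%Z -> x <> IZR p / IZR q.

Definition euler_gamma : R :=
  real (Lim_seq (fun n : nat => sum_n_m (fun i : nat => / INR i) 1 n - ln (INR n))).

Definition fseq (c n : R) : R := flr (/ c * (n + 1)) - flr (/ c * n).
Definition gseq (c n : R) : R := flr (frc c * (n + 1)) - flr (frc c * n).

From Stdlib Require Import Reals ZArith Lra Lia.
From Coquelicot Require Import Coquelicot.
Open Scope R_scope.

(* With B(n) = {c}{(n+1)/c} + {{c}(c'_{n+1}+k+1)} the numerator of the series,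
   the summand telescopes: f(n) g(c'_n+k+1) = {c}/c - B(n) + B(n-1), because
   [{c}(c'_n+k+1)] moves exactly when c'_n does.  Dividing by n and summing gives
   the exact identity
     sum_{n<=x} = {c}/c (1 + H_x) + {{c}(1+k)} - B(x)/x - sum_{n<x} B(n)/(n(n+1)),
   and the error terms are controlled by 0 <= H_x - log x - gamma <= 1/x,
   0 <= log(mc) - log x <= 1/x, 0 <= B <= 2 and the telescoping bound
   sum_{n>=x} B(n)/(n(n+1)) <= 2/x, with x = [mc] >= m. *)

Lemma flr_spec (y : R) : flr y <= y < flr y + 1.
Proof. unfold flr. destruct (base_Int_part y). lra. Qed.

Lemma frc_bounds (y : R) : 0 <= frc y < 1.
Proof. unfold frc. destruct (flr_spec y). lra. Qed.

Lemma flr_eq (y : R) (z : Z) : IZR z <= y < IZR z + 1 -> flr y = IZR z.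
Proof. intros Hz. unfold flr. rewrite <- (Int_part_spec y z) by lra. reflexivity. Qed.

Lemma flr_addr_small (y e : R) : 0 <= e < 1 ->
  flr (y + e) = flr y \/ flr (y + e) = flr y + 1.
Proof.
  intros He. destruct (flr_spec y) as [Hlo Hhi].
  change (flr y) with (IZR (Int_part y)) in *.
  destruct (Rlt_le_dec (y + e) (IZR (Int_part y) + 1)).
  - left. apply flr_eq. lra.
  - right. rewrite <- plus_IZR. apply flr_eq. rewrite plus_IZR. lra.
Qed.

Lemma ln_sub_bounds (x y : R) : 0 < x <= y -> (y - x) / y <= ln y - ln x <= (y - x) / x.
Proof.
  assert (ln_le_sub1 : forall t, 0 < t -> ln t <= t - 1).
  { intros t Ht. pose proof (exp_ineq1_le (ln t)). rewrite exp_ln in *; lra. }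
  intros Hxy. split.
  - pose proof (ln_le_sub1 (x / y) ltac:(apply Rdiv_lt_0_compat; lra)) as L.
    rewrite ln_div in L by lra.
    replace (x / y - 1) with (- ((y - x) / y)) in L by (field; lra). lra.
  - pose proof (ln_le_sub1 (y / x) ltac:(apply Rdiv_lt_0_compat; lra)) as L.
    rewrite ln_div in L by lra.
    replace (y / x - 1) with ((y - x) / x) in L by (field; lra). lra.
Qed.

Definition harmonic (N : nat) : R := sum_n_m (fun i : nat => / INR i) 1 N.

Lemma harmonic_0 : harmonic 0 = 0.
Proof. unfold harmonic. rewrite sum_n_m_zero; [reflexivity | lia]. Qed.

Lemma harmonic_S (N : nat) : harmonic (S N) = harmonic N + / INR (S N).
Proof. unfold harmonic. rewrite sum_n_Sm; [reflexivity | lia]. Qed.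

Lemma ln_succ_bounds (n : nat) : (0 < n)%nat ->
  / INR (S n) <= ln (INR (S n)) - ln (INR n) <= / INR n.
Proof.
  intros Hn. assert (0 < INR n) by (apply lt_0_INR; lia).
  pose proof (ln_sub_bounds (INR n) (INR (S n))) as L. rewrite S_INR in *.
  replace (INR n + 1 - INR n) with 1 in L by ring. unfold Rdiv in L. lra.
Qed.

Lemma euler_gamma_bounds (n : nat) :
  harmonic (S n) - ln (INR (S n)) - / INR (S n) <= euler_gamma
  <= harmonic (S n) - ln (INR (S n)).
Proof.
  set (u := fun j => harmonic (S j) - ln (INR (S j))).
  assert (Hu : forall j, u (S j) <= u j /\ u j - / INR (S j) <= u (S j) - / INR (S (S j))).
  { intro j. unfold u. rewrite (harmonic_S (S j)).
    pose proof (ln_succ_bounds (S j) ltac:(lia)). lra. }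
  assert (Hlow : forall j, 0 <= u j - / INR (S j)).
  { induction j.
    - unfold u. rewrite harmonic_S, harmonic_0. simpl INR. rewrite ln_1. lra.
    - specialize (Hu j). lra. }
  assert (Hpos : forall j, 0 < / INR (S j)) by (intro; apply Rinv_0_lt_compat, lt_0_INR; lia).
  destruct (ex_finite_lim_seq_decr u 0) as [l Hl].
  { intro; apply Hu. }
  { intro j. specialize (Hlow j). specialize (Hpos j). lra. }
  assert (Hg : euler_gamma = l).
  { unfold euler_gamma. rewrite <- Lim_seq_incr_1. fold (harmonic 0).
    change (real (Lim_seq u) = l). rewrite (is_lim_seq_unique _ _ Hl). reflexivity. }
  rewrite Hg. split.
  - assert (Hr : Rbar_le (u n - / INR (S n)) l); [|exact Hr].
    apply (is_lim_seq_le_loc (fun _ => u n - / INR (S n)) u); [|apply is_lim_seq_const|exact Hl].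
    exists n. intros m Hm. specialize (Hpos m).
    enough (u n - / INR (S n) <= u m - / INR (S m)) by lra.
    induction Hm; [lra|]. specialize (Hu m). lra.
  - apply (is_lim_seq_decr_compare u l Hl). intro; apply Hu.
Qed.

Lemma series_telescoping_bound (b : nat -> R) (K : R) (N : nat) : (0 < N)%nat ->
  (forall j, 0 <= b j <= K * (/ INR (N + j) - / INR (N + j + 1))) ->
  ex_series b /\ 0 <= Series b <= K / INR N.
Proof.
  intros HN Hb.
  assert (Hinv : forall j, 0 < / INR (N + j)) by (intro; apply Rinv_0_lt_compat, lt_0_INR; lia).
  assert (HK : 0 <= K).
  { specialize (Hb 0%nat). pose proof (Hinv 0%nat). pose proof (Hinv 1%nat).
    rewrite Nat.add_0_r in *.
    assert (/ INR (N + 1) < / INR N).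
    { apply Rinv_0_lt_contravar; [apply lt_0_INR; lia | apply lt_INR; lia]. }
    nra. }
  assert (Hpart : forall n, 0 <= sum_n b n <= K * (/ INR N - / INR (N + n + 1))).
  { induction n.
    - rewrite sum_O, Nat.add_0_r. specialize (Hb 0%nat). rewrite Nat.add_0_r in Hb. exact Hb.
    - rewrite sum_Sn. specialize (Hb (S n)).
      replace (N + S n)%nat with (N + n + 1)%nat in Hb by lia.
      replace (N + S n + 1)%nat with (N + n + 1 + 1)%nat by lia.
      change (plus (sum_n b n) (b (S n))) with (sum_n b n + b (S n)). lra. }
  assert (Hbound : forall n, sum_n b n <= K / INR N).
  { intro n. specialize (Hpart n). pose proof (Hinv (n + 1)%nat).
    rewrite Nat.add_assoc in *. unfold Rdiv. nra. }
  destruct (ex_finite_lim_seq_incr (sum_n b) (K / INR N)) as [l Hl]; [|exact Hbound|].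
  { intro n. rewrite sum_Sn. specialize (Hb (S n)). change (plus ?a ?x) with (a + x). lra. }
  assert (Hs : is_series b l) by exact Hl.
  split; [exists l; exact Hs|]. rewrite (is_series_unique _ _ Hs). split.
  - pose proof (is_lim_seq_incr_compare (sum_n b) l Hl) as Hc.
    specialize (Hpart 0%nat). apply (Rle_trans _ (sum_n b 0)); [lra|].
    apply Hc. intro n. rewrite sum_Sn. specialize (Hb (S n)). change (plus ?a ?x) with (a + x). lra.
  - assert (Hr : Rbar_le l (K / INR N)); [|exact Hr].
    apply (is_lim_seq_le (sum_n b) (fun _ => K / INR N)); [exact Hbound|exact Hl|apply is_lim_seq_const].
Qed.

Lemma Series_succ_split (t : nat -> R) (p : nat) : ex_series (fun j => t (S j)) ->
  Series (fun j => t (S j)) = sum_n_m t 1 p + Series (fun j => t (S p + j)%nat).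
Proof.
  intros Hex. destruct p as [|q].
  - rewrite sum_n_m_zero by lia. change (zero : R) with 0. rewrite Rplus_0_l. reflexivity.
  - rewrite (Series_incr_n _ (S q)) by (lia || exact Hex). simpl pred.
    rewrite <- sum_n_Reals. unfold sum_n. rewrite sum_n_m_S. reflexivity.
Qed.

(* The paper's d^{-1}{c^{-1}(n+1)} + {d^{-1}(c'_{n+1}+k+1)}, with d^{-1} = {c}. *)
Definition series_numer (c : R) (k n : nat) : R :=
  frc c * frc (/ c * (INR n + 1)) + frc (frc c * (flr (/ c * (INR n + 1)) + INR k + 1)).

Definition series_term (c : R) (k n : nat) : R :=
  series_numer c k n / (INR n * (INR n + 1)).

Lemma series_numer_bounds (c : R) (k n : nat) : 0 <= series_numer c k n <= 2.
Proof.
  unfold series_numer. pose proof (frc_bounds c).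
  pose proof (frc_bounds (/ c * (INR n + 1))).
  pose proof (frc_bounds (frc c * (flr (/ c * (INR n + 1)) + INR k + 1))). nra.
Qed.

Lemma series_term_bounds (c : R) (k n : nat) : (0 < n)%nat ->
  0 <= series_term c k n <= 2 * (/ INR n - / INR (n + 1)).
Proof.
  intros Hn. assert (0 < INR n) by (apply lt_0_INR; lia).
  rewrite plus_INR. simpl (INR 1).
  replace (/ INR n - / (INR n + 1)) with (/ (INR n * (INR n + 1))) by (field; lra).
  assert (0 < / (INR n * (INR n + 1))) by (apply Rinv_0_lt_compat; nra).
  unfold series_term, Rdiv. pose proof (series_numer_bounds c k n). nra.
Qed.

Lemma series_term_tail_bound (c : R) (k N : nat) : (0 < N)%nat ->
  ex_series (fun j => series_term c k (N + j)) /\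
  0 <= Series (fun j => series_term c k (N + j)) <= 2 / INR N.
Proof.
  intros HN. apply series_telescoping_bound; [exact HN|].
  intro j. apply series_term_bounds. lia.
Qed.

Lemma series_numer_0 (c : R) (k : nat) : 1 < c ->
  series_numer c k 0 = frc c / c + frc (frc c * (1 + INR k)).
Proof.
  intros Hc. unfold series_numer. simpl INR. rewrite Rplus_0_l, Rmult_1_r.
  assert (Hflr : flr (/ c) = 0).
  { apply (flr_eq (/ c) 0). split; [apply Rlt_le, Rinv_0_lt_compat; lra|].
    rewrite Rplus_0_l, <- Rinv_1. apply Rinv_0_lt_contravar; lra. }
  unfold frc at 2. rewrite Hflr. replace (0 + INR k + 1) with (1 + INR k) by ring.
  unfold Rdiv. ring.
Qed.

Lemma summand_telescopes (c : R) (k n : nat) : 1 < c ->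
  fseq c (INR (S n)) * gseq c (flr (INR (S n) / c) + INR k + 1)
  = frc c / c - series_numer c k (S n) + series_numer c k n.
Proof.
  intros Hc. unfold fseq, gseq, series_numer.
  rewrite S_INR. replace ((INR n + 1) / c) with (/ c * (INR n + 1)) by (unfold Rdiv; ring).
  set (y := / c * (INR n + 1)). set (fc := frc c).
  replace (/ c * (INR n + 1 + 1)) with (y + / c) by (unfold y; ring).
  assert (0 < / c < 1).
  { split; [apply Rinv_0_lt_compat; lra|]. rewrite <- Rinv_1. apply Rinv_0_lt_contravar; lra. }
  unfold frc. destruct (flr_addr_small y (/ c)) as [-> | ->]; [lra| |].
  - field. lra.
  - replace (flr y + 1 + INR k + 1) with (flr y + INR k + 1 + 1) by ring. field. lra.
Qed.

Lemma partial_sum_identity (c : R) (k p : nat) : 1 < c ->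
  (sum_n_m (fun n : nat => fseq c (INR n) * gseq c (flr (INR n / c) + INR k + 1) / INR n)
     1 (S p) : R)
  = frc c / c * (1 + harmonic (S p)) + frc (frc c * (1 + INR k))
    - series_numer c k (S p) / INR (S p) - sum_n_m (series_term c k) 1 p.
Proof.
  intros Hc. induction p as [|p IH].
  - rewrite sum_n_n, sum_n_m_zero, harmonic_S, harmonic_0 by lia.
    rewrite summand_telescopes, series_numer_0 by exact Hc.
    change (zero : R) with 0. simpl INR. field. lra.
  - rewrite (sum_n_Sm _ 1 (S p)), (sum_n_Sm (series_term c k) 1 p) by lia.
    change (plus ?a ?b) with (a + b).
    rewrite IH, summand_telescopes, (harmonic_S (S p)) by exact Hc.
    unfold series_term. rewrite (S_INR (S p)).
    assert (0 < INR (S p)) by (apply lt_0_INR; lia). field. lra.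
Qed.

Lemma harmonic_ln_euler_gamma_error (x : nat) (y : R) : (0 < x)%nat ->
  INR x <= y < INR x + 1 -> Rabs (harmonic x - ln y - euler_gamma) <= / INR x.
Proof.
  intros Hx Hy. destruct x as [|n]; [lia|].
  pose proof (euler_gamma_bounds n).
  assert (0 < INR (S n)) by (apply lt_0_INR; lia).
  pose proof (ln_sub_bounds (INR (S n)) y ltac:(lra)) as Hln.
  assert (0 <= (y - INR (S n)) / y) by (apply Rdiv_le_0_compat; lra).
  assert ((y - INR (S n)) / INR (S n) <= / INR (S n)).
  { unfold Rdiv. rewrite <- (Rmult_1_l (/ INR (S n))) at 2.
    apply Rmult_le_compat_r; [apply Rlt_le, Rinv_0_lt_compat|]; lra. }
  apply Rabs_le. lra.
Qed.

Lemma INR_Int_part_bounds (y : R) : 0 <= y ->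
  INR (Z.to_nat (Int_part y)) <= y < INR (Z.to_nat (Int_part y)) + 1.
Proof.
  intros Hy. destruct (base_Int_part y) as [H1 H2].
  assert (0 <= Int_part y)%Z by (enough (-1 < Int_part y)%Z by lia; apply lt_IZR; lra).
  rewrite INR_IZR_INZ, Z2Nat.id by assumption. lra.
Qed.

Lemma partial_sum_expansion (c : R) (k x : nat) (y : R) :
  1 < c -> (0 < x)%nat -> INR x <= y < INR x + 1 ->
  Rabs (sum_n_m (fun n : nat =>
            fseq c (INR n) * gseq c (flr (INR n / c) + INR k + 1) / INR n) 1 x
        - (frc c / c + frc c / c * (ln y + euler_gamma) + frc (frc c * (1 + INR k))
           - Series (fun j => series_term c k (S j))))
  <= 3 / INR x.
Proof.
  intros Hc Hx Hy. destruct x as [|p]; [lia|].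
  assert (Hinv : 0 < / INR (S p)) by (apply Rinv_0_lt_compat, lt_0_INR; lia).
  rewrite partial_sum_identity, (Series_succ_split _ p) by
    (exact Hc || exact (proj1 (series_term_tail_bound c k 1 ltac:(lia)))).
  destruct (series_term_tail_bound c k (S p) ltac:(lia)) as [_ HT].
  set (T := Series _) in *.
  pose proof (harmonic_ln_euler_gamma_error (S p) y ltac:(lia) Hy) as Hg.
  set (E := harmonic (S p) - ln y - euler_gamma) in *.
  assert (Hal : 0 <= frc c / c <= 1).
  { pose proof (frc_bounds c). split; [apply Rdiv_le_0_compat; lra|].
    apply (Rdiv_le_1 (frc c) c); lra. }
  assert (HaE : Rabs (frc c / c * E) <= / INR (S p)).
  { rewrite Rabs_mult, (Rabs_pos_eq (frc c / c)) by lra. pose proof (Rabs_pos E). nra. }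
  assert (HB : 0 <= series_numer c k (S p) / INR (S p) <= 2 / INR (S p)).
  { pose proof (series_numer_bounds c k (S p)). unfold Rdiv. split; nra. }
  replace (_ - _) with (frc c / c * E + (T - series_numer c k (S p) / INR (S p)))
    by (unfold E, Rdiv; ring).
  eapply Rle_trans; [apply Rabs_triang|].
  assert (Rabs (T - series_numer c k (S p) / INR (S p)) <= 2 / INR (S p)) by (apply Rabs_le; lra).
  unfold Rdiv in *. lra.
Qed.

Theorem lemma12 (c : R) (k : nat) (Hc1 : 1 < c) (Hirr : irrational c) :
  let d := / frc c in
  let c' := fun n : R => flr (/ c * n) in
  exists C M : R, forall m : nat, (0 < m)%nat -> M <= INR m ->
    let x := Z.to_nat (Int_part (INR m * c)) in
    Rabs (sum_n_m (fun n : nat =>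
              fseq c (INR n) * gseq c (flr (INR n / c) + INR k + 1) / INR n) 1 x
          - (frc c / c + / (c * d) * (ln (INR m) + ln c + euler_gamma)
             + frc (/ d * (1 + INR k))
             - Series (fun j : nat =>
                 let n := INR (j + 1) in
                 (/ d * frc (/ c * (n + 1)) + frc (/ d * (c' (n + 1) + INR k + 1)))
                 / (n * (n + 1)))))
    <= C / INR m.
Proof.
  intros d c'. exists 3, 0. intros m Hm _ x.
  assert (Hm0 : 0 < INR m) by (apply lt_0_INR; lia).
  pose proof (INR_Int_part_bounds (INR m * c) ltac:(nra)) as Hx. fold x in Hx.
  assert (Hmx : (m <= x)%nat) by (enough (m < S x)%nat by lia; apply INR_lt; rewrite S_INR; nra).
  rewrite (Series_ext _ (fun j => series_term c k (S j)))
    by (intro j; unfold d, c'; rewrite Nat.add_1_r, Rinv_inv; reflexivity).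
  unfold d. rewrite Rinv_inv, Rinv_mult, Rinv_inv, <- ln_mult, (Rmult_comm (/ c)) by lra.
  eapply Rle_trans; [apply (partial_sum_expansion c k x); lra || lia|].
  unfold Rdiv. apply Rmult_le_compat_l; [lra|].
  apply Rinv_le_contravar; [lra | apply le_INR; exact Hmx].
Qed.
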